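(* Let $m\ge 0$ be an integer and let $n,N$ be complex numbers such that $N\notin\{0,-1,\dots,-m\}$ and neither $n-m$ nor $1-N-m+n$ belongs to $\{0,-1,\dots,-(m-1)\}$. Then $$(-1)^m\frac{(m+1)\,(n-m)_m\,(N-n)_m}{m!\,(N)_{m+1}}\;{}_3F_2\!\left(\begin{matrix}-m,\ n+1,\ 1-N+n\\ n-m,\ 1-N-m+n\end{matrix};1\right)=\frac{(m+1)^2}{N}\;{}_3F_2\!\left(\begin{matrix}-m,\ n+1,\ m+2\\ 2,\ N+1\end{matrix};1\right).$$
   Context: $(a)_k=a(a+1)\cdots(a+k-1)$ is the Pochhammer symbol, $(a)_0=1$. ${}_3F_2\!\left(\begin{matrix}-m,a_2,a_3\\ b_1,b_2\end{matrix};1\right)=\sum_{k=0}^{m}\frac{(-m)_k(a_2)_k(a_3)_k}{(b_1)_k(b_2)_k\,k!}$ (terminating sum). *)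

From HB Require Import structures.
From mathcomp Require Import all_boot all_order all_algebra.
From mathcomp Require Import complex.
From mathcomp Require Import reals.
Set Implicit Arguments. Unset Strict Implicit. Unset Printing Implicit Defensive.
Import Order.TTheory GRing.Theory Num.Theory.
Local Open Scope ring_scope.

Definition poch {F : comNzRingType} (a : F) (k : nat) : F :=
  \prod_(i < k) (a + i%:R).

(* Terminating 3F2 with top parameter -m, evaluated at 1. *)
Definition hyp3F2m {F : fieldType} (m : nat) (a2 a3 b1 b2 : F) : F :=
  \sum_(k < m.+1)
    (poch (- (m%:R)) k * poch a2 k * poch a3 k) /
    (poch b1 k * poch b2 k * (k`!)%:R).

From HB Require Import structures.
From mathcomp Require Import all_boot all_order all_algebra.
From mathcomp Require Import complex.
From mathcomp Require Import reals.
From mathcomp Require Import ring.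

Set Implicit Arguments.
Unset Strict Implicit.
Unset Printing Implicit Defensive.
Import Order.TTheory GRing.Theory Num.Theory.

(* Clearing denominators turns (d)_m (e)_m 3F2(-m, a, b; d, e; 1) into the
   polynomial [hyp3F2m_poly m a b d e]. Expanding it by two Chu-Vandermonde
   summations gives the transformation (a, b; d, e) -> (d - a, b; d, 1 + b - e - m),
   and applying it twice, with the symmetries in (a, b) and (d, e) in between,
   gives Sheppard's transformation
   (a, b; d, e) -> (a, 1 + a + b - d - e - m; 1 + a - e - m, 1 + a - d - m).
   For the parameters of the theorem this maps (n + 1, 1 - N + n; n - m, 1 - N - m + n)
   to (n + 1, m + 2; N + 1, 2), and the prefactors agree because
   (N - n)_m = (-1)^m (1 - N - m + n)_m, (N)_(m+1) = N (N + 1)_m and (2)_m = (m + 1)!. *)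

Lemma ffactD n k i : n ^_ (k + i) = n ^_ k * (n - k) ^_ i.
Proof.
elim: i => [|i IH]; first by rewrite addn0 ffactn0 muln1.
by rewrite addnS !ffactnSr IH subnDA mulnA.
Qed.

Lemma bin_trinomial m k i : 'C(m, k) * 'C(m - k, i) = 'C(m, k + i) * 'C(k + i, k).
Proof.
apply/eqP; rewrite -(eqn_pmul2r (_ : 0 < k`! * i`!)) ?muln_gt0 ?fact_gt0 //.
rewrite mulnACA !bin_ffact -ffactD -mulnA -[in k`! * i`!](addKn k i).
by rewrite bin_fact ?leq_addr // bin_ffact.
Qed.

Local Open Scope ring_scope.

Section Pochhammer.
Variable R : comNzRingType.
Implicit Types (a b d e x y : R).

Lemma poch0 a : poch a 0 = 1.
Proof. by rewrite /poch big_ord0. Qed.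

Lemma pochS a k : poch a k.+1 = poch a k * (a + k%:R).
Proof. by rewrite /poch big_ord_recr. Qed.

Lemma pochD a k l : poch a (k + l) = poch a k * poch (a + k%:R) l.
Proof.
elim: l => [|l IH]; first by rewrite addn0 poch0 mulr1.
by rewrite addnS !pochS IH natrD -mulrA addrA.
Qed.

Lemma poch_recl a k : poch a k.+1 = a * poch (a + 1) k.
Proof. by rewrite -add1n pochD /poch big_ord1 addr0. Qed.

Lemma poch2 k : poch 2 k = (k.+1)`!%:R :> R.
Proof.
elim: k => [|k IH]; first by rewrite poch0.
by rewrite pochS IH [(k.+2)`!]factS natrM mulrC -[k.+2]add2n natrD.
Qed.

Lemma poch_reflect x l : poch (1 - x - l%:R) l = (-1) ^+ l * poch x l.
Proof.
have -> : (-1) ^+ l * poch x l = \prod_(i < l) - (x + i%:R).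
  by rewrite prodrN card_ord.
rewrite /poch (reindex_inj rev_ord_inj) /=.
by apply: eq_bigr => i _; rewrite natrB // -addn1 natrD; ring.
Qed.

Lemma poch_oppn m k : poch (- m%:R) k = (-1) ^+ k * ('C(m, k) * k`!)%:R :> R.
Proof.
rewrite bin_ffact; elim: k => [|k IH]; first by rewrite poch0 mulr1.
rewrite pochS IH ffactnSr exprS natrM.
case: (leqP k m) => [km | /ffact_small->]; last by rewrite !(mul0r, mulr0).
by rewrite natrB //; ring.
Qed.

Lemma poch_vandermonde x y n :
  poch (x + y) n = \sum_(k < n.+1) 'C(n, k)%:R * poch x k * poch y (n - k).
Proof.
elim: n => [|n IH]; first by rewrite big_ord1 /= !poch0 !mulr1.
set G := fun k => 'C(n, k)%:R * poch x k * poch y (n.+1 - k).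
have shift_x : \sum_(k < n.+1) 'C(n, k.+1)%:R * poch x k.+1 * poch y (n - k)
               = \sum_(k < n.+1) G k - poch y n.+1.
  rewrite [in RHS]big_ord_recl /G bin0 poch0 subn0 !mul1r [RHS]addrC addKr.
  rewrite [LHS]big_ord_recr /= bin_small // !mul0r addr0.
  by apply: eq_bigr => k _; rewrite subSS.
rewrite pochS IH big_distrl [RHS]big_ord_recl /= bin0 poch0 subn0 !mul1r.
under [in RHS]eq_bigr => k _ do rewrite /bump /= add1n binS natrD !mulrDl.
rewrite big_split /= shift_x addrA (addrC (poch y n.+1)) subrK -big_split /=.
apply: eq_bigr => k _; have kn : (k <= n)%N by rewrite -ltnS.
by rewrite /G subSn // subSS !pochS natrB //; ring.
Qed.

Lemma big_ord_bin_widen (G : nat -> R) n M : (n < M)%N ->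
  \sum_(k < n.+1) 'C(n, k)%:R * G k = \sum_(k < M) 'C(n, k)%:R * G k.
Proof.
move=> nM; rewrite (big_ord_widen M (fun k => 'C(n, k)%:R * G k)) // big_mkcond.
apply: eq_bigr => k _; case: ltnP => // nk.
by rewrite bin_small // mul0r.
Qed.

Lemma poch_vandermonde_alt a d j :
  \sum_(k < j.+1) (-1) ^+ k * 'C(j, k)%:R * poch a k * poch (d + k%:R) (j - k)
  = poch (d - a) j.
Proof.
have -> : poch (d - a) j = (-1) ^+ j * poch (a + (1 - d - j%:R)) j.
  by rewrite -[a + _](_ : 1 - (d - a) - j%:R = _) ?poch_reflect ?signrMK //; ring.
rewrite poch_vandermonde mulr_sumr; apply: eq_bigr => k _.
have kj : (k <= j)%N by rewrite -ltnS.
rewrite -[1 - d - j%:R](_ : 1 - (d + k%:R) - (j - k)%:R = _); last first.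
  by rewrite natrB //; ring.
have sign_split : (-1) ^+ j * (-1) ^+ (j - k) = (-1) ^+ k :> R.
  by rewrite -{1}(subnKC kj) exprD -mulrA -expr2 sqrr_sign mulr1.
by rewrite poch_reflect -sign_split; ring.
Qed.

Lemma sum_sign_bin_poch a d j m : (j <= m)%N ->
  \sum_(k < m.+1) (-1) ^+ k * 'C(j, k)%:R * poch a k * poch (d + k%:R) (m - k)
  = poch (d - a) j * poch (d + j%:R) (m - j).
Proof.
move=> jm; pose G k := (-1) ^+ k * poch a k * poch (d + k%:R) (m - k).
transitivity (\sum_(k < m.+1) 'C(j, k)%:R * G k).
  by apply: eq_bigr => k _; rewrite /G; ring.
rewrite -big_ord_bin_widen // -poch_vandermonde_alt mulr_suml.
apply: eq_bigr => k _; have kj : (k <= j)%N by rewrite -ltnS.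
rewrite /G; have -> : (m - k = (j - k) + (m - j))%N by rewrite addnBAC // subnKC.
rewrite pochD natrB // (_ : d + k%:R + (j%:R - k%:R) = d + j%:R); last ring.
ring.
Qed.

Lemma bin_poch_expand b e m k : (k <= m)%N ->
  'C(m, k)%:R * poch b k * poch (e + k%:R) (m - k) =
  \sum_(j < m.+1) 'C(m, j)%:R * 'C(j, k)%:R * poch b j * poch (e - b) (m - j).
Proof.
move=> km; pose H j := 'C(m, j)%:R * 'C(j, k)%:R * poch b j * poch (e - b) (m - j).
have -> : \sum_(j < m.+1) H j = \sum_(i < (m - k).+1) H (i + k)%N.
  rewrite -!(big_mkord xpredT) (@big_cat_nat _ _ _ k) ?leqW //=.
  rewrite big_nat big1 ?add0r => [|j /andP[_ jk]]; last first.
    by rewrite /H (bin_small jk) mulr0 !mul0r.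
  by rewrite -{1}[k]add0n big_addn subSn // big_mkord.
have -> : e + k%:R = b + k%:R + (e - b) by ring.
rewrite poch_vandermonde !mulr_sumr; apply: eq_bigr => i _.
rewrite /H -subnDA [(i + k)%N]addnC pochD -natrM -bin_trinomial natrM; ring.
Qed.

End Pochhammer.

Section Hyp3F2mPoly.
Variable R : comNzRingType.
Implicit Types (a b d e : R).

Definition hyp3F2m_poly m a b d e : R :=
  \sum_(k < m.+1) (-1) ^+ k * 'C(m, k)%:R * poch a k * poch b k
     * poch (d + k%:R) (m - k) * poch (e + k%:R) (m - k).

Lemma hyp3F2m_poly_swap_top m a b d e :
  hyp3F2m_poly m a b d e = hyp3F2m_poly m b a d e.
Proof. by apply: eq_bigr => k _; ring. Qed.

Lemma hyp3F2m_poly_swap_bot m a b d e :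
  hyp3F2m_poly m a b d e = hyp3F2m_poly m a b e d.
Proof. by apply: eq_bigr => k _; ring. Qed.

Lemma hyp3F2m_poly_expand m a b d e : hyp3F2m_poly m a b d e =
  \sum_(j < m.+1) 'C(m, j)%:R * poch b j * poch (e - b) (m - j)
     * (poch (d - a) j * poch (d + j%:R) (m - j)).
Proof.
transitivity (\sum_(k < m.+1) (-1) ^+ k * poch a k * poch (d + k%:R) (m - k)
   * ('C(m, k)%:R * poch b k * poch (e + k%:R) (m - k))).
  by apply: eq_bigr => k _; ring.
under eq_bigr => k _ do rewrite (bin_poch_expand _ _ (ltnSE (ltn_ord k))) mulr_sumr.
rewrite exchange_big /=; apply: eq_bigr => j _.
rewrite -(sum_sign_bin_poch a d (ltnSE (ltn_ord j))) mulr_sumr.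
by apply: eq_bigr => k _; ring.
Qed.

Lemma hyp3F2m_poly_transform m a b d e :
  hyp3F2m_poly m a b d e = (-1) ^+ m * hyp3F2m_poly m (d - a) b d (1 + b - e - m%:R).
Proof.
rewrite -[LHS](signrMK m); congr (_ * _).
rewrite hyp3F2m_poly_expand mulr_sumr; apply: eq_bigr => j _.
have jm : (j <= m)%N by rewrite -ltnS.
have -> : 1 + b - e - m%:R + j%:R = 1 - (e - b) - (m - j)%:R by rewrite natrB //; ring.
have -> : (-1) ^+ m = (-1) ^+ j * (-1) ^+ (m - j) :> R by rewrite -exprD subnKC.
by rewrite poch_reflect; ring.
Qed.

Lemma hyp3F2m_poly_sheppard m a b d e : hyp3F2m_poly m a b d e =
  hyp3F2m_poly m a (1 + a + b - d - e - m%:R) (1 + a - e - m%:R) (1 + a - d - m%:R).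
Proof.
rewrite [in LHS]hyp3F2m_poly_swap_top [in LHS]hyp3F2m_poly_transform.
rewrite [in LHS]hyp3F2m_poly_swap_bot [in LHS]hyp3F2m_poly_transform signrMK.
by rewrite [in LHS]hyp3F2m_poly_swap_top; congr hyp3F2m_poly; ring.
Qed.

End Hyp3F2mPoly.

Lemma poch_neq0 (R : idomainType) (a : R) k :
  (forall i, (i < k)%N -> a != - i%:R) -> poch a k != 0.
Proof. by move=> h; apply/prodf_neq0 => i _; rewrite addr_eq0 h. Qed.

Lemma hyp3F2mE (F : numFieldType) m (a b d e : F) : poch d m != 0 -> poch e m != 0 ->
  hyp3F2m m a b d e = hyp3F2m_poly m a b d e / (poch d m * poch e m).
Proof.
move=> dm0 em0; rewrite /hyp3F2m /hyp3F2m_poly mulr_suml; apply: eq_bigr => k _.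
have km : (k <= m)%N by rewrite -ltnS.
have split_m (c : F) : poch c m = poch c k * poch (c + k%:R) (m - k).
  by rewrite -pochD subnKC.
move: dm0 em0; rewrite !split_m !mulf_eq0 !negb_or => /andP[dk0 dk'0] /andP[ek0 ek'0].
have k0 : (k`!)%:R != 0 :> F by rewrite pnatr_eq0 -lt0n fact_gt0.
rewrite poch_oppn natrM; field.
by rewrite dk0 dk'0 ek0 ek'0 k0.
Qed.

Local Open Scope complex_scope.

Theorem mainTheorem2 (R : realType) (m : nat) (n N : R[i])
  (hN : forall j : nat, (j <= m)%N -> N != - (j%:R))
  (hn : forall j : nat, (j < m)%N -> n - m%:R != - (j%:R))
  (hNn : forall j : nat, (j < m)%N -> 1 - N - m%:R + n != - (j%:R)) :
  (-1) ^+ m * ((m.+1)%:R * poch (n - m%:R) m * poch (N - n) m)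
     / ((m`!)%:R * poch N m.+1)
   * hyp3F2m m (n + 1) (1 - N + n) (n - m%:R) (1 - N - m%:R + n)
  = (m.+1)%:R ^+ 2 / N * hyp3F2m m (n + 1) (m.+2)%:R 2 (N + 1).
Proof.
have nm0 := poch_neq0 hn.
have Nnm0 := poch_neq0 hNn.
have /andP[N0 N1m0] : (N != 0) && (poch (N + 1) m != 0).
  by rewrite -negb_or -mulf_eq0 -poch_recl (@poch_neq0 _ N m.+1 hN).
have two_m0 : poch 2 m != 0 :> R[i] by rewrite poch2 pnatr_eq0 -lt0n fact_gt0.
rewrite (hyp3F2mE _ _ nm0 Nnm0) (hyp3F2mE _ _ two_m0 N1m0).
have -> : hyp3F2m_poly m (n + 1) (1 - N + n) (n - m%:R) (1 - N - m%:R + n)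
        = hyp3F2m_poly m (n + 1) (m.+2)%:R 2 (N + 1).
  by rewrite hyp3F2m_poly_sheppard hyp3F2m_poly_swap_bot; congr hyp3F2m_poly; ring.
rewrite (_ : 1 - N - m%:R + n = 1 - (N - n) - m%:R) ?poch_reflect in Nnm0 *; last ring.
have /andP[sign0 Nn0] : ((-1) ^+ m != 0 :> R[i]) && (poch (N - n) m != 0).
  by rewrite -negb_or -mulf_eq0.
rewrite poch_recl poch2 factS natrM; field.
by rewrite N1m0 N0 Nn0 sign0 nm0 addrC natr1 !pnatr_eq0 -lt0n fact_gt0.
Qed.
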